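(* Consider a finite set of time periods $\mathcal{T}$ and a finite set of user types $\mathcal{K}=\{1,\dots,K\}$, where type $k$ has aggregate demand $D_k^t\ge 0$ and value of lost load $V_k^t$ in period $t$, with $V_1^t\le\cdots\le V_K^t$. Let $D_a^t=\sum_kD_k^t>0$. For capacity $r\ge0$ and random variables $\Theta^t$ supported in $[0,1]$, let $s^t=\min(D_a^t,r\Theta^t)$, $d_k^t=\frac{D_k^t}{D_a^t}s^t$, $C_s^t(r,\Theta^t)=\sum_k(V_k^t-p)(D_k^t-d_k^t)$. Fix $p$ with $p\le V_1^t$ for all $t$, $c_r>0$, $\xi\ge0$. Let $f^{\mathrm{No}}(r)=\sum_tp\,\mathbb{E}[s^t]-c_rr$ and $f^{\mathrm{Ins}}(r,\pi)=\sum_k\sum_t\pi_k^tD_k^t+\sum_tp\,\mathbb{E}[s^t]-c_rr-\sum_t\mathbb{E}[C_s^t(r,\Theta^t)]$, and define the social cost $C^{\mathrm{SO}}(r)=c_rr+\sum_t\mathbb{E}[C_s^t(r,\Theta^t)]$. Let $(r^*,\pi^* )$ be the optimal solution of Problem-Ins: minimize $\sum_k\sum_t\pi_k^tD_k^t$ over $r\ge0,\pi$ subject to $f^{\mathrm{Ins}}(r,\pi)\ge\xi$, $\pi_k^t-\pi_m^t=(V_k^t-V_m^t)\mathbb{E}[1-s^t/D_a^t]$ for all $t,m,k$, and $0\le\pi_k^t\le(V_k^t-p)\mathbb{E}[1-s^t/D_a^t]$ for all $t,k$. Let $r^\ddagger$ be the optimal solution of Problem-NoIns: maximize $r\ge0$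 subject to $f^{\mathrm{No}}(r)\ge\xi$. Then $C^{\mathrm{SO}}(r^* )\le C^{\mathrm{SO}}(r^\ddagger)$, i.e., the optimal social cost under the insurance-providing utility is no larger than under the no-insurance utility.
   Context: Expectations are over $\Theta^t$. The problems are assumed feasible with optimal solutions as described. *)

From HB Require Import structures.
From mathcomp Require Import all_boot all_order all_algebra.
From mathcomp Require Import all_classical all_reals all_analysis.
Set Implicit Arguments. Unset Strict Implicit. Unset Printing Implicit Defensive.
Import Order.TTheory GRing.Theory Num.Theory.
Local Open Scope ring_scope.

Section Defs.
Variables (d : measure_display) (Om : measurableType d) (R : realType).
Variable (P : probability Om R).
Variables (nT K : nat).
Variables (D V : 'I_nT -> 'I_K -> R) (Theta : 'I_nT -> Om -> R) (p : R).

Definition expect (f : Om -> R) : R := fine (\int[P]_w (f w)%:E).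

Definition Dagg (t : 'I_nT) : R := \sum_(k < K) D t k.

Definition supply (r : R) (t : 'I_nT) (w : Om) : R := Num.min (Dagg t) (r * Theta t w).

Definition served (r : R) (t : 'I_nT) (k : 'I_K) (w : Om) : R :=
  D t k / Dagg t * supply r t w.

Definition Cs (r : R) (t : 'I_nT) (w : Om) : R :=
  \sum_(k < K) (V t k - p) * (D t k - served r t k w).

Variable cr : R.

Definition fNo (r : R) : R := \sum_(t < nT) p * expect (supply r t) - cr * r.

Definition fIns (r : R) (pi : 'I_nT -> 'I_K -> R) : R :=
  \sum_(k < K) \sum_(t < nT) pi t k * D t k
  + \sum_(t < nT) p * expect (supply r t) - cr * r
  - \sum_(t < nT) expect (Cs r t).

Definition CSO (r : R) : R := cr * r + \sum_(t < nT) expect (Cs r t).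

Definition shortfall (r : R) (t : 'I_nT) : R :=
  expect (fun w => 1 - supply r t w / Dagg t).

Variable xi : R.

Definition ins_objective (pi : 'I_nT -> 'I_K -> R) : R :=
  \sum_(k < K) \sum_(t < nT) pi t k * D t k.

Definition ins_feasible (r : R) (pi : 'I_nT -> 'I_K -> R) : Prop :=
  [/\ 0 <= r, xi <= fIns r pi,
      (forall t k m, pi t k - pi t m = (V t k - V t m) * shortfall r t) &
      (forall t k, 0 <= pi t k /\ pi t k <= (V t k - p) * shortfall r t)].

Definition noins_feasible (r : R) : Prop := 0 <= r /\ xi <= fNo r.

End Defs.

(* The expected shortage cost of period t is
   (\sum_k (V_k^t - p) D_k^t) E[1 - s^t / D_a^t], which is exactly what the
   premium caps (V_k^t - p) E[1 - s^t / D_a^t] collect; any feasible premium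
   vector collects less.  Hence f^Ins(r, pi) <= f^No(r) on feasible pairs, so
   r* <= r‡, while (r‡, caps) is feasible for Problem-Ins, so the optimal
   premium total is at most the expected shortage cost at r‡.  At r‡ the
   no-insurance constraint is tight (when p >= 0, slack would buy more
   capacity), and the insurance constraint at r* combines these facts into
   the comparison of social costs. *)

From Pilot Require Import Defs.
From HB Require Import structures.
From mathcomp Require Import all_boot all_order all_algebra.
From mathcomp Require Import all_classical all_reals all_analysis.
From mathcomp Require Import ring lra.
Set Implicit Arguments. Unset Strict Implicit. Unset Printing Implicit Defensive.
Import Order.TTheory GRing.Theory Num.Theory.
Local Open Scope ring_scope.

Section Expectation.
Variables (d : measure_display) (Om : measurableType d) (R : realType).
Variable P : probability Om R.

Lemma expectE (f : Om -> R) : expect P f = fine 'E_P[f].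
Proof. by rewrite unlock. Qed.

Lemma bounded_measurable_Lfun1 (f : Om -> R) (M : R) :
  measurable_fun setT f -> (forall w, `|f w| <= M) -> f \in Lfun P 1.
Proof.
move=> mf fM; apply/Lfun1_integrable/measurable_bounded_integrable => //.
  by rewrite (le_lt_trans (probability_le1 P measurableT)) ?ltry.
exists M; split; first exact: num_real.
by move=> x Mx y _ /=; rewrite (le_trans (fM y)) ?ltW.
Qed.

Lemma expect_ge0 (f : Om -> R) : (forall w, 0 <= f w) -> 0 <= expect P f.
Proof. by move=> f0; rewrite expectE fine_ge0 ?expectation_ge0. Qed.

Lemma expectZl (k : R) (f : Om -> R) :
  f \in Lfun P 1 -> expect P (k \o* f) = k * expect P f.
Proof.
by move=> f1; rewrite !expectE expectationZl // fineM ?expectation_fin_num.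
Qed.

Lemma le_expect (f g : Om -> R) : f \in Lfun P 1 -> g \in Lfun P 1 ->
  (forall w, f w <= g w) -> expect P f <= expect P g.
Proof.
move=> f1 g1 fg; rewrite -subr_ge0 !expectE -fineB ?expectation_fin_num //.
by rewrite -expectationB // fine_ge0 // expectation_ge0 // => w; rewrite subr_ge0.
Qed.

End Expectation.

Section Utility.
Variables (d : measure_display) (Om : measurableType d) (R : realType).
Variable P : probability Om R.
Variables (nT K : nat) (D V : 'I_nT -> 'I_K -> R) (Theta : 'I_nT -> Om -> R).
Variables (p cr xi : R).

Hypothesis D_ge0 : forall t k, 0 <= D t k.
Hypothesis Dagg_gt0 : forall t, 0 < Dagg D t.
Hypothesis Theta_measurable : forall t, measurable_fun setT (Theta t).
Hypothesis Theta_ge0 : forall t w, 0 <= Theta t w.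

Local Notation Da := (Dagg D).
Local Notation s := (supply D Theta).
Local Notation E := (expect P).
Local Notation shortage_cost := (Cs D V Theta p).
Local Notation shortfall := (shortfall P D Theta).
Local Notation fNo := (fNo P D Theta p cr).
Local Notation fIns := (fIns P D V Theta p cr).
Local Notation ins_feasible := (ins_feasible P D V Theta p cr xi).
Local Notation noins_feasible := (noins_feasible P D Theta p cr xi).
Local Notation revenue r := (\sum_(t < nT) p * E (s r t)).

Lemma supply_ge0 r t w : 0 <= r -> 0 <= s r t w.
Proof. by move=> r0; rewrite le_min (ltW (Dagg_gt0 t)) mulr_ge0. Qed.

Lemma supply_le_Dagg r t w : s r t w <= Da t.
Proof. by rewrite ge_min lexx. Qed.

Lemma le_supply r r' t w : r <= r' -> s r t w <= s r' t w.
Proof. by move=> rr'; rewrite le_min !ge_min lexx ler_wpM2r ?orbT. Qed.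

Lemma supply_Lfun1 r t : 0 <= r -> s r t \in Lfun P 1.
Proof.
move=> r0; have s_bounded w : `|s r t w| <= Da t.
  by rewrite ger0_norm ?supply_ge0 ?supply_le_Dagg.
apply: bounded_measurable_Lfun1 _ s_bounded.
apply: measurable_realfun.measurable_minr; first exact: measurable_cst.
by apply: measurable_realfun.measurable_funM => //; exact: measurable_cst.
Qed.

Lemma shortfall_ge0 r t : 0 <= shortfall r t.
Proof.
apply: expect_ge0 => w.
by rewrite subr_ge0 ler_pdivrMr ?Dagg_gt0 // mul1r supply_le_Dagg.
Qed.

Lemma expect_shortage_cost r t : 0 <= r ->
  E (shortage_cost r t) = (\sum_(k < K) (V t k - p) * D t k) * shortfall r t.
Proof.
move=> r0; rewrite /Defs.shortfall -expectZl; last first.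
  rewrite rpredB ?Lfun_cst //.
  have -> : (fun w => s r t w / Da t) = (Da t)^-1 *: s r t.
    by apply/funext => w; rewrite /= mulrC.
  by rewrite rpredZ ?supply_Lfun1.
congr E; apply/funext => w /=; rewrite /Cs /served mulr_sumr.
by apply: eq_bigr => k _; ring.
Qed.

Definition premium_cap r t k := (V t k - p) * shortfall r t.

Lemma ins_objective_premium_cap r : 0 <= r ->
  ins_objective D (premium_cap r) = \sum_(t < nT) E (shortage_cost r t).
Proof.
move=> r0; rewrite /ins_objective exchange_big; apply: eq_bigr => t _.
rewrite expect_shortage_cost // mulr_suml; apply: eq_bigr => k _.
by rewrite /premium_cap mulrAC.
Qed.

Lemma le_ins_objective pi pi' : (forall t k, pi t k <= pi' t k) ->
  ins_objective D pi <= ins_objective D pi'.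
Proof.
by move=> le_pi; do 2 apply: ler_sum => ? _; rewrite ler_wpM2r.
Qed.

Lemma fInsE r pi :
  fIns r pi = ins_objective D pi + fNo r - \sum_(t < nT) E (shortage_cost r t).
Proof. by rewrite /Defs.fIns /Defs.fNo /ins_objective addrA. Qed.

Lemma ins_feasible_noins r pi : ins_feasible r pi -> noins_feasible r.
Proof.
case=> r0 xi_le _ pi_le; split => //; apply: le_trans xi_le _.
rewrite fInsE -ins_objective_premium_cap // lerBlDr addrC lerD2l.
by apply: le_ins_objective => t k; case: (pi_le t k).
Qed.

Lemma noins_feasible_premium_cap r : (forall t k, p <= V t k) ->
  noins_feasible r -> ins_feasible r (premium_cap r).
Proof.
move=> p_le_V [r0 xi_le]; split => //.
- by rewrite fInsE ins_objective_premium_cap // addrC addKr.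
- by move=> t k m; rewrite /premium_cap -mulrBl opprB addrA subrK.
- by move=> t k; rewrite mulr_ge0 ?subr_ge0 ?shortfall_ge0.
Qed.

Lemma le_revenue r r' : 0 <= p -> 0 <= r -> r <= r' -> revenue r <= revenue r'.
Proof.
move=> p0 r0 rr'; apply: ler_sum => t _; apply: ler_wpM2l => //.
apply: le_expect; rewrite ?supply_Lfun1 ?(le_trans r0 rr') // => w.
exact: le_supply.
Qed.

Lemma revenue_le0 r : p <= 0 -> 0 <= r -> revenue r <= 0.
Proof.
move=> p0 r0; apply: sumr_le0 => t _; rewrite mulr_le0_ge0 //.
by apply: expect_ge0 => w; exact: supply_ge0.
Qed.

Section NoInsuranceOptimum.
Variable rdd : R.
Hypothesis cr_gt0 : 0 < cr.
Hypothesis rdd_feasible : noins_feasible rdd.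
Hypothesis rdd_max : forall r, noins_feasible r -> r <= rdd.

(* Otherwise the slack [fNo rdd - xi] pays for [(fNo rdd - xi) / cr] more capacity. *)
Lemma fNo_le_xi : 0 <= p -> fNo rdd <= xi.
Proof.
move=> p0; rewrite leNgt; apply/negP => xi_lt.
have [rdd0 _] := rdd_feasible.
pose e := (fNo rdd - xi) / cr.
have e_gt0 : 0 < e by rewrite divr_gt0 ?subr_gt0.
have cr_e : cr * e = fNo rdd - xi by rewrite mulrC divfK ?lt0r_neq0.
have : noins_feasible (rdd + e).
  split; first by rewrite addr_ge0 // ltW.
  have rdd_le : rdd <= rdd + e by rewrite lerDl ltW.
  have := le_revenue p0 rdd0 rdd_le.
  by rewrite /Defs.fNo mulrDr in cr_e *; lra.
by move=> /rdd_max; rewrite gerDl leNgt e_gt0.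
Qed.

Lemma revenue_sub_xi_le r : 0 <= xi -> 0 <= r -> r <= rdd ->
  revenue r - xi <= cr * rdd.
Proof.
move=> xi0 r0 r_le; have [rdd0 _] := rdd_feasible.
have cr_rdd0 : 0 <= cr * rdd by rewrite mulr_ge0 // ltW.
have [p0|p0] := leP 0 p; last by have := revenue_le0 (ltW p0) r0; lra.
have := fNo_le_xi p0; have := le_revenue p0 r0 r_le.
by rewrite /Defs.fNo; lra.
Qed.
End NoInsuranceOptimum.
End Utility.

Theorem proposition2
  (d : measure_display) (Om : measurableType d) (R : realType)
  (P : probability Om R) (nT K : nat)
  (D V : 'I_nT -> 'I_K -> R) (Theta : 'I_nT -> Om -> R)
  (p cr xi : R)
  (HD : forall t k, 0 <= D t k)
  (HDa : forall t, 0 < Dagg D t)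
  (HV : forall t (k m : 'I_K), (k <= m)%N -> V t k <= V t m)
  (HTmeas : forall t, measurable_fun setT (Theta t))
  (HT01 : forall t w, 0 <= Theta t w <= 1)
  (Hp : forall t (k : 'I_K), (nat_of_ord k = 0%N) -> p <= V t k)
  (Hcr : 0 < cr) (Hxi : 0 <= xi)
  (rs : R) (pis : 'I_nT -> 'I_K -> R)
  (Hopt_ins : ins_feasible P D V Theta p cr xi rs pis /\
     forall r pi, ins_feasible P D V Theta p cr xi r pi ->
       ins_objective D pis <= ins_objective D pi)
  (rdd : R)
  (Hopt_no : noins_feasible P D Theta p cr xi rdd /\
     forall r, noins_feasible P D Theta p cr xi r -> r <= rdd) :
  CSO P D V Theta p cr rs <= CSO P D V Theta p cr rdd.
Proof.
have HT0 t w : 0 <= Theta t w by case/andP: (HT01 t w).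
have p_le_V t k : p <= V t k.
  have K_gt0 : (0 < K)%N by apply: leq_ltn_trans (ltn_ord k).
  by apply: le_trans (Hp t (Ordinal K_gt0) erefl) _; exact: HV.
case: Hopt_ins Hopt_no => [rs_feasible pis_min] [rdd_feasible rdd_max].
have [rs0 xi_le_fIns _ _] := rs_feasible.
have [rdd0 _] := rdd_feasible.
have rs_le_rdd : rs <= rdd.
  exact/rdd_max/(ins_feasible_noins HD HDa HTmeas HT0 rs_feasible).
have pis_le : ins_objective D pis <= \sum_(t < nT) expect P (Cs D V Theta p rdd t).
  rewrite -(ins_objective_premium_cap P V p HDa HTmeas HT0 rdd0).
  exact/pis_min/(noins_feasible_premium_cap HDa HTmeas HT0 p_le_V).
have := revenue_sub_xi_le HDa HTmeas HT0 Hcr rdd_feasible rdd_max Hxi rs0 rs_le_rdd.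
by move: xi_le_fIns; rewrite fInsE /CSO /fNo; lra.
Qed.
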